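(* Let $G:\{0,1\}^n\to\{0,1\}^N$ be a Boolean circuit and $\mathsf{Ext}:\{0,1\}^N\times\{0,1\}^d\to\{0,1\}^m$ be linear, i.e., for each $r\in\{0,1\}^d$ the map $\mathsf{Ext}(\cdot,r):\mathbb{F}_2^N\to\mathbb{F}_2^m$ is $\mathbb{F}_2$-linear; for each $r$ fix a circuit $\mathsf{Ext}_r$ of fan-in-2 $\oplus$ gates computing $\mathsf{Ext}(\cdot,r)$, and let $C_r:\{0,1\}^n\to\{0,1\}^m$ be the circuit $C_r(s)=\mathsf{Ext}(G(s),r)$ obtained by feeding the outputs of $G$ into $\mathsf{Ext}_r$. Then for every $y\in\{0,1\}^N$ and $r\in\{0,1\}^d$, there is a simple parity reduction from $\tau_y(G)$ to $\tau_z(C_r)$, where $z:=\mathsf{Ext}(y,r)$; that is, $\tau_y(G)\le^{\oplus}\tau_z(C_r)$.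
   Context: For a circuit $G$ with $n$ inputs and $\ell$ outputs, whose gates have fan-in at most 2 over a basis containing $\oplus$, and $b\in\{0,1\}^\ell$, $\tau_b(G)$ is the 3-CNF with variables $x\in\{0,1\}^n$ (inputs) and $\mathsf{hist}\in\{0,1\}^s$, one variable $v_g$ per internal gate $g$ (including output gates; for input gates $v_g$ is the corresponding $x_i$). For every internal gate $g$ with operation $\circ_g$ and children $g_l,g_r$ it contains the clauses of the constraint $v_g=v_{g_l}\circ_g v_{g_r}$ (a 3-CNF of at most 8 clauses), and for each $i\in[\ell]$ with $i$-th output gate $g_i$ it contains the width-1 clause expressing $v_{g_i}=b_i$. Thus $\tau_b(G)$ is satisfiable iff $b\in\mathrm{Range}(G)$. Simple parity reduction: for CNFs $F(x_1,\dots,x_n)$ and $H(y_1,\dots,y_{n'})$, $F\le^{\oplus}H$ if there is an $\mathbb{F}_2$-linear map $\mathsf{redu}:\{0,1\}^n\to\{0,1\}^{n'}$ (each output bit is the XOR of a subset of input bits) such that for every clause $g$ of $H$, one of the following holds: $g\circ\mathsf{redu}\equiv\mathsf{True}$; $g\circ\mathsf{redu}$ equals some clause of $F$; or $g$ is a width-1 clause (a single literal, i.e., an equation $y_i=c$) and $g\circ\mathsf{redu}$ (a linear equation) is the XOR (sum over $\mathbb{F}_2$) of a subset of clauses of $F$, these clauses being width-1. *)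

From mathcomp Require Import all_boot.
Set Implicit Arguments. Unset Strict Implicit. Unset Printing Implicit Defensive.

Definition literal := (nat * bool)%type.
Definition clause := seq literal.
Record cnf := CNF { nvars : nat; clauses : seq clause }.

Definition eval_lit (a : nat -> bool) (l : literal) : bool := a l.1 == l.2.
Definition eval_clause (a : nat -> bool) (C : clause) : bool := has (eval_lit a) C.
(* F2 affine form of a literal: it vanishes iff the literal holds,
   i.e. literal (i,c) is the linear equation x_i + c = 0. *)
Definition lit_form (a : nat -> bool) (l : literal) : bool := a l.1 (+) l.2.

(** * Circuits: nodes 0..cin-1 are inputs, node cin+k is the k-th gate;
    each gate has two children (fan-in <= 2) and an arbitrary binary operation. *)
Record gate := Gate { gl : nat; gr : nat; gop : bool -> bool -> bool }.
Record circuit := Circuit { cin : nat; gates : seq gate; outs : seq nat }.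

Definition gate0 := Gate 0 0 (fun _ _ => false).

Definition wf_circuit (C : circuit) : Prop :=
  (forall k, k < size (gates C) ->
     gl (nth gate0 (gates C) k) < cin C + k /\ gr (nth gate0 (gates C) k) < cin C + k) /\
  all (fun o => o < cin C + size (gates C)) (outs C).

Definition xor_circuit (C : circuit) : Prop :=
  forall k, k < size (gates C) -> forall a b, gop (nth gate0 (gates C) k) a b = a (+) b.

Definition eval_nodes (C : circuit) (x : seq bool) : seq bool :=
  foldl (fun vals g => rcons vals (gop g (nth false vals (gl g)) (nth false vals (gr g))))
        x (gates C).
Definition eval_circ (C : circuit) (x : seq bool) : seq bool :=
  [seq nth false (eval_nodes C x) o | o <- outs C].

(* the constraint v = gl g `op` gr g, as the 4 width-3 clauses excluding each
   falsifying assignment *)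
Definition gate_clauses (v : nat) (g : gate) : seq clause :=
  [seq [:: (gl g, ~~ p.1); (gr g, ~~ p.2); (v, gop g p.1 p.2)]
  | p <- [:: (false, false); (false, true); (true, false); (true, true)]].

Definition tau (C : circuit) (b : seq bool) : cnf :=
  CNF (cin C + size (gates C))
      (flatten [seq gate_clauses (cin C + k) (nth gate0 (gates C) k)
               | k <- iota 0 (size (gates C))]
       ++ [seq [:: (nth 0 (outs C) i, nth false b i)] | i <- iota 0 (size (outs C))]).

(* redu j = the subset of F-variables whose XOR is the j-th H-variable *)
Definition xor_vars (a : nat -> bool) (S : seq nat) : bool :=
  foldr (fun i acc => a i (+) acc) false S.
Definition redu_assign (redu : nat -> seq nat) (a : nat -> bool) : nat -> bool :=
  fun j => xor_vars a (redu j).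

Definition simple_parity_red (F H : cnf) : Prop :=
  exists redu : nat -> seq nat,
    (forall j, j < nvars H -> all (fun i => i < nvars F) (redu j)) /\
    forall g, g \in clauses H ->
      [\/ (forall a, eval_clause (redu_assign redu a) g),
          (exists2 f, f \in clauses F &
              forall a, eval_clause (redu_assign redu a) g = eval_clause a f)
        | size g = 1 /\
          exists S : seq nat,
            [/\ uniq S, all (fun k => k < size (clauses F)) S,
                all (fun k => size (nth [::] (clauses F) k) == 1) S &
                forall a, lit_form (redu_assign redu a) (head (0, false) g) =
                  foldr (fun k acc =>
                           lit_form a (head (0, false) (nth [::] (clauses F) k)) (+) acc)
                        false S]].

Definition shift_node (G E : circuit) (k : nat) : nat :=
  if k < cin E then nth 0 (outs G) k else k - cin E + (cin G + size (gates G)).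

Definition compose (G E : circuit) : circuit :=
  Circuit (cin G)
          (gates G ++ [seq Gate (shift_node G E (gl g)) (shift_node G E (gr g)) (gop g)
                      | g <- gates E])
          [seq shift_node G E o | o <- outs E].

Definition xorv (u v : seq bool) : seq bool := [seq p.1 (+) p.2 | p <- zip u v].

From mathcomp Require Import all_boot.

(* Keep every variable of tau_y(G) and send the gate variable of the k-th gate
   of Ext_r to the XOR of those outputs of G on which the linear form computed
   by that gate depends (its coefficients are read off by evaluating Ext_r on
   unit vectors).  Under this map the gate clauses of G are unchanged, those of
   Ext_r become tautologies since an XOR gate computes the sum of the forms of
   its children, and the output clause "output i = z_i" becomes the sum of the
   output clauses of tau_y(G) selected by the coefficients of output i, because
   z_i is that same linear form evaluated at y. *)

Definition eval_step (vals : seq bool) (g : gate) : seq bool :=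
  rcons vals (gop g (nth false vals (gl g)) (nth false vals (gr g))).

Lemma size_foldl_eval_step vals gs :
  size (foldl eval_step vals gs) = size vals + size gs.
Proof.
elim: gs vals => [|g gs IH] vals /=; first by rewrite addn0.
by rewrite IH size_rcons addSnnS.
Qed.

Lemma nth_foldl_eval_step vals gs {i} : i < size vals ->
  nth false (foldl eval_step vals gs) i = nth false vals i.
Proof.
elim: gs vals => [|g gs IH] vals //= lt_i.
by rewrite IH ?nth_rcons ?lt_i // size_rcons ltnW.
Qed.

Lemma nth_eval_nodes_input C x v : v < size x ->
  nth false (eval_nodes C x) v = nth false x v.
Proof. exact: nth_foldl_eval_step. Qed.

Lemma nth_eval_nodes_gate C x k (g := nth gate0 (gates C) k) :
  k < size (gates C) -> gl g < size x + k -> gr g < size x + k ->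
  nth false (eval_nodes C x) (size x + k) =
  gop g (nth false (eval_nodes C x) (gl g)) (nth false (eval_nodes C x) (gr g)).
Proof.
move=> lt_k lt_l lt_r.
rewrite /eval_nodes -/eval_step -(cat_take_drop k (gates C)) foldl_cat.
rewrite (drop_nth gate0 lt_k) -/g /=.
set V := foldl eval_step x _.
have size_V : size V = size x + k by rewrite size_foldl_eval_step size_take lt_k.
have lt_V i : i < size x + k -> i < size (eval_step V g).
  by rewrite size_rcons size_V => /ltnW.
rewrite (nth_foldl_eval_step _ _ (lt_V _ lt_l)) (nth_foldl_eval_step _ _ (lt_V _ lt_r)).
rewrite nth_foldl_eval_step.
  by rewrite !nth_rcons size_V lt_l lt_r ltnn eqxx.
by rewrite size_rcons size_V.
Qed.

Definition respects_gates (C : circuit) (val : nat -> bool) : Prop :=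
  forall k, k < size (gates C) ->
    let g := nth gate0 (gates C) k in val (cin C + k) = gop g (val (gl g)) (val (gr g)).

Lemma eval_nodes_respects C x : wf_circuit C -> size x = cin C ->
  respects_gates C (nth false (eval_nodes C x)).
Proof.
move=> [wf_gates _] size_x k lt_k /=; have [lt_l lt_r] := wf_gates k lt_k.
by rewrite -size_x nth_eval_nodes_gate // size_x.
Qed.

Lemma respects_gates_unique C f h : wf_circuit C ->
  respects_gates C f -> respects_gates C h -> (forall v, v < cin C -> f v = h v) ->
  forall v, v < cin C + size (gates C) -> f v = h v.
Proof.
move=> [wf_gates _] resp_f resp_h eq_in; elim/ltn_ind => v IH lt_v.
have [lt_in | ge_in] := ltnP v (cin C); first exact: eq_in.
have [k lt_k def_v] : exists2 k, k < size (gates C) & v = cin C + k.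
  by exists (v - cin C); [rewrite ltn_subLR | rewrite subnKC].
have [lt_l lt_r] := wf_gates k lt_k; rewrite -def_v in lt_l lt_r.
have lt_l' := ltn_trans lt_l lt_v; have lt_r' := ltn_trans lt_r lt_v.
by rewrite def_v (resp_f k lt_k) (resp_h k lt_k) /= !IH.
Qed.

Section XorCircuit.

Variable E : circuit.
Hypotheses (wfE : wf_circuit E) (xorE : xor_circuit E).

Definition node_coef (v j : nat) : bool :=
  nth false (eval_nodes E (mkseq (pred1 j) (cin E))) v.

Definition lin_val (f : nat -> bool) (v : nat) : bool :=
  \big[addb/false]_(j <- iota 0 (cin E)) (node_coef v j && f j).

Lemma lin_val_input f v : v < cin E -> lin_val f v = f v.
Proof.
move=> lt_v; rewrite /lin_val (bigD1_seq v) ?mem_iota ?iota_uniq //=.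
rewrite /node_coef nth_eval_nodes_input ?size_mkseq // nth_mkseq //= eqxx.
rewrite big1 ?addbF // => j ne_jv.
by rewrite nth_eval_nodes_input ?size_mkseq // nth_mkseq //= eq_sym (negbTE ne_jv).
Qed.

Lemma lin_val_addb f h v :
  lin_val f v (+) lin_val h v = lin_val (fun j => f j (+) h j) v.
Proof.
rewrite /lin_val -big_split; apply: eq_bigr => j _.
by case: (node_coef v j).
Qed.

Lemma lin_val_respects f : respects_gates E (lin_val f).
Proof.
move=> k lt_k /=; rewrite xorE // /lin_val -big_split; apply: eq_bigr => j _ /=.
have := eval_nodes_respects _ _ wfE (size_mkseq (pred1 j) (cin E)) k lt_k.
rewrite /= xorE // => coef_gate.
by rewrite /node_coef coef_gate; case: (f j); rewrite ?andbT ?andbF.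
Qed.

Lemma eval_xor_circuit x v : size x = cin E -> v < cin E + size (gates E) ->
  nth false (eval_nodes E x) v = lin_val (nth false x) v.
Proof.
move=> size_x; apply: (respects_gates_unique _ _ _ wfE) => [||u lt_u].
- exact: eval_nodes_respects.
- exact: lin_val_respects.
by rewrite lin_val_input // nth_eval_nodes_input ?size_x.
Qed.

End XorCircuit.

Lemma gate_clauses_sat val v g : val v = gop g (val (gl g)) (val (gr g)) ->
  forall c, c \in gate_clauses v g -> eval_clause val c.
Proof.
move=> val_v c /mapP [[p1 p2] _ ->]; rewrite /eval_clause /eval_lit /= val_v.
by case: p1 p2 (val (gl g)) (val (gr g)) => [] [] [] []; rewrite ?eqxx ?orbT.
Qed.

Lemma gate_clauses_vars {v g c l} : c \in gate_clauses v g -> l \in c ->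
  l.1 \in [:: gl g; gr g; v].
Proof. by move=> /mapP [p _ ->]; rewrite !inE => /or3P [] /eqP ->; rewrite eqxx ?orbT. Qed.

Lemma eval_clause_eq_in val val' c : (forall l, l \in c -> val l.1 = val' l.1) ->
  eval_clause val c = eval_clause val' c.
Proof. by move=> eq_c; apply: eq_in_has => l /eq_c; rewrite /eval_lit => ->. Qed.

Lemma mem_clauses_tau C b c : c \in clauses (tau C b) ->
  (exists2 k, k < size (gates C) & c \in gate_clauses (cin C + k) (nth gate0 (gates C) k))
  \/ (exists2 i, i < size (outs C) & c = [:: (nth 0 (outs C) i, nth false b i)]).
Proof.
rewrite mem_cat => /orP [/flattenP [cs /mapP [k k_in ->] c_in] | /mapP [i i_in ->]].
- by left; exists k; move: k_in; rewrite mem_iota.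
- by right; exists i; move: i_in; rewrite mem_iota.
Qed.

Lemma gate_clauses_sub_tau C b k c : k < size (gates C) ->
  c \in gate_clauses (cin C + k) (nth gate0 (gates C) k) -> c \in clauses (tau C b).
Proof.
move=> lt_k c_in; rewrite mem_cat; apply/orP; left; apply/flattenP.
by eexists; [apply: map_f; rewrite mem_iota | exact: c_in].
Qed.

Lemma size_gate_clauses_tau C :
  size (flatten [seq gate_clauses (cin C + k) (nth gate0 (gates C) k)
                | k <- iota 0 (size (gates C))]) = 4 * size (gates C).
Proof.
rewrite size_flatten /shape -map_comp -[in RHS](size_iota 0 (size (gates C))).
by elim: (iota 0 _) => //= k ks ->; rewrite mulnS.
Qed.

Lemma size_clauses_tau C b : size (clauses (tau C b)) = 4 * size (gates C) + size (outs C).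
Proof. by rewrite size_cat size_gate_clauses_tau size_map size_iota. Qed.

Lemma nth_clauses_tau_out C b i : i < size (outs C) ->
  nth [::] (clauses (tau C b)) (4 * size (gates C) + i) = [:: (nth 0 (outs C) i, nth false b i)].
Proof.
move=> lt_i; rewrite nth_cat size_gate_clauses_tau ltnNge leq_addr addKn.
by rewrite (nth_map 0) ?size_iota // nth_iota.
Qed.

Lemma foldr_addb_big (f : nat -> bool) s :
  foldr (fun k acc => f k (+) acc) false s = \big[addb/false]_(k <- s) f k.
Proof. by rewrite -(foldr_map f addb) foldrE big_map. Qed.

Section Composition.

Variables (G E : circuit) (y : seq bool).
Hypotheses (wfG : wf_circuit G) (wfE : wf_circuit E) (xorE : xor_circuit E).
Hypotheses (cinE : cin E = size (outs G)) (size_y : size y = cin E).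

Local Notation nG := (cin G + size (gates G)).

Lemma outs_G_bound j : j < cin E -> nth 0 (outs G) j < nG.
Proof. by move=> lt_j; apply: (allP (proj2 wfG)); rewrite mem_nth -?cinE. Qed.

(* [w - nG + cin E] is the node of E that [shift_node] sends to [w >= nG]. *)
Definition compose_redu (w : nat) : seq nat :=
  if w < nG then [:: w]
  else [seq nth 0 (outs G) j | j <- iota 0 (cin E) & node_coef E (w - nG + cin E) j].

Local Notation red a := (redu_assign compose_redu a).

Lemma compose_redu_bound w : all (fun i => i < nG) (compose_redu w).
Proof.
rewrite /compose_redu; case: ifP => [lt_w | _] /=; first by rewrite lt_w.
apply/allP => i /mapP [j]; rewrite mem_filter mem_iota => /andP [_ /andP [_ lt_j]] ->.
exact: outs_G_bound.
Qed.

Lemma red_low a w : w < nG -> red a w = a w.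
Proof. by move=> lt_w; rewrite /redu_assign /compose_redu lt_w /= addbF. Qed.

Lemma red_shift a u :
  red a (shift_node G E u) = lin_val E (fun j => a (nth 0 (outs G) j)) u.
Proof.
rewrite /shift_node; case: ltnP => [lt_u | ge_u].
  by rewrite red_low ?lin_val_input ?outs_G_bound.
rewrite /redu_assign /compose_redu ltnNge leq_addl /= addnK subnK // /xor_vars.
rewrite foldr_addb_big big_map big_filter big_mkcond.
by apply: eq_bigr => j _; case: node_coef.
Qed.

Lemma red_clause_G k c a : k < size (gates G) ->
  c \in gate_clauses (cin G + k) (nth gate0 (gates G) k) ->
  eval_clause (red a) c = eval_clause a c.
Proof.
move=> lt_k c_in; apply: eval_clause_eq_in => l /(gate_clauses_vars c_in).
have [lt_l lt_r] := proj1 wfG k lt_k.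
have lt_v : cin G + k < nG by rewrite ltn_add2l.
by rewrite !inE => /or3P [] /eqP ->; rewrite red_low // (ltn_trans _ lt_v).
Qed.

Lemma red_clause_E k c a : k < size (gates E) ->
  let g := nth gate0 (gates E) k in
  c \in gate_clauses (nG + k) (Gate (shift_node G E (gl g)) (shift_node G E (gr g)) (gop g)) ->
  eval_clause (red a) c.
Proof.
move=> lt_k g; apply: gate_clauses_sat => /=.
have -> : nG + k = shift_node G E (cin E + k).
  by rewrite /shift_node ltnNge leq_addr /= addKn addnC.
by rewrite !red_shift (lin_val_respects _ wfE xorE _ _ lt_k).
Qed.

Definition out_clause_ids (o : nat) : seq nat :=
  [seq 4 * size (gates G) + j | j <- iota 0 (cin E) & node_coef E o j].

Lemma out_clause_ids_spec o :
  [/\ uniq (out_clause_ids o),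
      all (fun k => k < size (clauses (tau G y))) (out_clause_ids o) &
      all (fun k => size (nth [::] (clauses (tau G y)) k) == 1) (out_clause_ids o)].
Proof.
split; first by rewrite map_inj_uniq ?filter_uniq ?iota_uniq //; apply: addnI.
all: apply/allP => i /mapP [j]; rewrite mem_filter mem_iota => /andP [_ /andP [_ lt_j]] ->.
  by rewrite size_clauses_tau ltn_add2l -cinE.
by rewrite nth_clauses_tau_out -?cinE.
Qed.

Lemma red_out_clause i a : i < size (outs E) ->
  let o := nth 0 (outs E) i in
  lit_form (red a) (shift_node G E o, nth false (eval_circ E y) i) =
  foldr (fun k acc => lit_form a (head (0, false) (nth [::] (clauses (tau G y)) k)) (+) acc)
        false (out_clause_ids o).
Proof.
move=> lt_i o; have lt_o : o < cin E + size (gates E) by apply/(allP (proj2 wfE))/mem_nth.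
rewrite /lit_form /= red_shift /eval_circ (nth_map 0) // eval_xor_circuit // lin_val_addb.
rewrite foldr_addb_big big_map big_filter big_mkcond; apply: eq_big_seq => j.
rewrite mem_iota => /andP [_ lt_j].
by rewrite nth_clauses_tau_out -?cinE //; case: node_coef.
Qed.

Lemma tau_compose_parity_red :
  simple_parity_red (tau G y) (tau (compose G E) (eval_circ E y)).
Proof.
exists compose_redu; split=> [w _ | c]; first exact: compose_redu_bound.
case/mem_clauses_tau => [[k lt_k c_in] | [i lt_i ->]].
- rewrite /= size_cat size_map in lt_k; rewrite /= nth_cat in c_in.
  case: (ltnP k (size (gates G))) => [lt_kG | ge_kG].
    rewrite lt_kG /= in c_in; apply: Or32; exists c => [|a].
      exact: gate_clauses_sub_tau c_in.
    exact: (red_clause_G _ _ _ lt_kG c_in).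
  rewrite ltnNge ge_kG (nth_map gate0) /= in c_in; last by rewrite ltn_subLR.
  apply: Or31 => a; apply: (red_clause_E (k - size (gates G))); first by rewrite ltn_subLR.
  by rewrite -addnA subnKC.
- rewrite /= size_map in lt_i.
  have [uniq_ids ids_lt ids_unit] := out_clause_ids_spec (nth 0 (outs E) i).
  apply: Or33; split=> //; exists (out_clause_ids (nth 0 (outs E) i)); split=> // a.
  by rewrite (nth_map 0) // red_out_clause.
Qed.

End Composition.

Theorem claim3p4 (n N d m : nat) (G : circuit)
  (Ext : seq bool -> seq bool -> seq bool) (ExtC : seq bool -> circuit) :
  wf_circuit G -> cin G = n -> size (outs G) = N ->
  (forall u r, size u = N -> size r = d -> size (Ext u r) = m) ->
  (forall u v r, size u = N -> size v = N -> size r = d ->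
     Ext (xorv u v) r = xorv (Ext u r) (Ext v r)) ->
  (forall r, size r = d ->
     [/\ cin (ExtC r) = N, size (outs (ExtC r)) = m, wf_circuit (ExtC r),
         xor_circuit (ExtC r) &
         forall u, size u = N -> eval_circ (ExtC r) u = Ext u r]) ->
  forall y r, size y = N -> size r = d ->
    simple_parity_red (tau G y) (tau (compose G (ExtC r)) (Ext y r)).
Proof.
move=> wfG _ size_outsG _ _ ExtC_spec y r size_y size_r.
have [cinE _ wfE xorE evalE] := ExtC_spec r size_r.
rewrite -evalE //; apply: tau_compose_parity_red => //; congruence.
Qed.
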